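(* Every sub-correlation matrix $\xi$ satisfies $\mathrm{Tr}[\xi\tau]\le1$ for all $\tau\in\mathsf P(S)$. Conversely, if $W\ge0$ satisfies $\mathrm{Tr}[W\tau]\le1$ for all $\tau\in\mathsf P(S)$, then $W/d$ is a sub-correlation matrix.
   Context: $S$ is a $d$-dimensional quantum system with non-degenerate Hamiltonian $H=\sum_i E_i|i\rangle\langle i|$, $E_1<\dots<E_d$; matrices are written in this eigenbasis. $\mathsf P(S)$ is the set of passive states, i.e. density matrices $\sum_i p_i|i\rangle\langle i|$ with $p_1\ge\dots\ge p_d$. A sub-correlation matrix is a positive semidefinite $d\times d$ matrix $\xi$ with $\xi_{ii}\le1$ for all $i$. *)

From HB Require Import structures.
From mathcomp Require Import all_boot all_order all_algebra.
Set Implicit Arguments. Unset Strict Implicit. Unset Printing Implicit Defensive.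
Import Order.TTheory GRing.Theory Num.Theory.
Local Open Scope ring_scope.

(* Matrices are written in the energy eigenbasis |1>,...,|d> of H,
   indexed by 'I_d (index 0 = ground state, i.e. E_1). *)

Definition psdmx (C : numClosedFieldType) (n : nat) (A : 'M[C]_n) : Prop :=
  A^T = map_mx Num.conj A /\
  forall v : 'rV[C]_n, 0 <= (v *m A *m (map_mx Num.conj v)^T) 0 0.

Definition density_mx (C : numClosedFieldType) (n : nat) (rho : 'M[C]_n) : Prop :=
  psdmx rho /\ \tr rho = 1.

Definition passive (C : numClosedFieldType) (n : nat) (tau : 'M[C]_n) : Prop :=
  density_mx tau /\
  exists p : 'rV[C]_n, tau = diag_mx p /\
    (forall i j : 'I_n, (i <= j)%N -> p 0 j <= p 0 i).

Definition subcorr (C : numClosedFieldType) (n : nat) (xi : 'M[C]_n) : Prop :=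
  psdmx xi /\ forall i : 'I_n, xi i i <= 1.

From mathcomp Require Import all_boot all_order all_algebra.
Import Order.TTheory GRing.Theory Num.Theory.
Local Open Scope ring_scope.

(* Direct part: for a diagonal density matrix tau = diag p one has
   Tr[xi tau] = sum_i xi_ii p_i <= sum_i p_i = 1, because p_i >= 0 and
   xi_ii <= 1.

   Converse: the maximally mixed state 1/d is passive, so the hypothesis
   gives Tr W <= d.  Scaling by the nonnegative real 1/d preserves positive
   semidefiniteness, and every diagonal entry of a PSD matrix lies between
   0 and the trace, whence (W/d)_ii <= Tr W / d <= 1. *)

Section PSD.
Context {C : numClosedFieldType} {n : nat}.

(* Testing the quadratic form on a basis vector gives the diagonal entry. *)
Lemma psd_diag_ge0 (A : 'M[C]_n) (i : 'I_n) : psdmx A -> 0 <= A i i.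
Proof.
case=> _ /(_ (delta_mx 0 i)).
have -> : map_mx Num.conj (delta_mx 0 i : 'rV[C]_n) = delta_mx 0 i.
  by apply/matrixP => a b; rewrite !mxE conjC_nat.
by rewrite trmx_delta -rowE -colE !mxE.
Qed.

Lemma psd_diag_le_trace (A : 'M[C]_n) (i : 'I_n) : psdmx A -> A i i <= \tr A.
Proof.
move=> psdA; rewrite /mxtrace (bigD1 i) //= lerDl.
by apply: sumr_ge0 => k _; apply: psd_diag_ge0.
Qed.

(* Multiplying by a nonnegative (hence real) scalar preserves PSD. *)
Lemma psdZ (c : C) (A : 'M[C]_n) : 0 <= c -> psdmx A -> psdmx (c *: A).
Proof.
move=> c_ge0 [herm quad]; have conj_c : Num.conj c = c by rewrite conj_Creal ?ger0_real.
split; first by rewrite linearZ /= herm map_mxZ /= conj_c.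
by move=> v; rewrite -scalemxAr -scalemxAl mxE mulr_ge0.
Qed.

(* The identity matrix is PSD: its quadratic form is a sum of |v_k|^2. *)
Lemma psd_identity : psdmx (1%:M : 'M[C]_n).
Proof.
split; first by rewrite tr_scalar_mx map_scalar_mx /= conjC1.
move=> v; rewrite mulmx1 !mxE; apply: sumr_ge0 => k _.
by rewrite !mxE mul_conjC_ge0.
Qed.

Lemma trace_mul_diag (A : 'M[C]_n) (p : 'rV[C]_n) :
  \tr (A *m diag_mx p) = \sum_i A i i * p 0 i.
Proof. by apply: eq_bigr => i _; rewrite mul_mx_diag mxE. Qed.

End PSD.

Lemma subcorr_trace_diag_le1 (C : numClosedFieldType) (n : nat)
    (xi : 'M[C]_n) (p : 'rV[C]_n) :
  subcorr xi -> density_mx (diag_mx p) -> \tr (xi *m diag_mx p) <= 1.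
Proof.
move=> [_ xi_le1] [psd_p tr_p].
have p_ge0 (i : 'I_n) : 0 <= p 0 i.
  by have := psd_diag_ge0 _ i psd_p; rewrite mxE eqxx mulr1n.
rewrite trace_mul_diag -tr_p /mxtrace; apply: ler_sum => i _.
by rewrite mxE eqxx mulr1n ler_piMl.
Qed.

Lemma passive_maximally_mixed (C : numClosedFieldType) (n : nat) :
  (0 < n)%N -> passive ((n%:R : C)^-1%:M : 'M[C]_n).
Proof.
move=> n_gt0; have inv_ge0 : 0 <= (n%:R : C)^-1 by rewrite invr_ge0 ler0n.
split; last by exists (const_mx (n%:R)^-1); rewrite diag_const_mx; split=> // *; rewrite !mxE.
split; last by rewrite mxtrace_scalar -[_ *+ n]mulr_natr mulVf // pnatr_eq0 -lt0n.
by rewrite -scalemx1; apply: psdZ; [|apply: psd_identity].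
Qed.

Theorem mainTheorem13 (C : numClosedFieldType) (d : nat) (hd : (0 < d)%N) :
  (forall xi : 'M[C]_d, subcorr xi ->
     forall tau : 'M[C]_d, passive tau -> \tr (xi *m tau) <= 1)
  /\
  (forall W : 'M[C]_d, psdmx W ->
     (forall tau : 'M[C]_d, passive tau -> \tr (W *m tau) <= 1) ->
     subcorr ((d%:R)^-1 *: W)).
Proof.
split=> [xi xi_sub tau [tau_dens [p [tau_diag _]]]|W psdW W_dual].
  by rewrite tau_diag in tau_dens *; exact: subcorr_trace_diag_le1.
have inv_ge0 : 0 <= (d%:R : C)^-1 by rewrite invr_ge0 ler0n.
have trW_le : (d%:R : C)^-1 * \tr W <= 1.
  by have := W_dual _ (passive_maximally_mixed C d hd); rewrite mul_mx_scalar mxtraceZ.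
split; first exact: psdZ.
move=> i; rewrite mxE; apply: le_trans trW_le.
by rewrite ler_wpM2l // psd_diag_le_trace.
Qed.
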